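(* Let $X$ be a finite set, $\mathbb{F}$ a field, $n\ge 2$, and let $F:X^n\to\mathbb{F}$ be a diagonal tensor, i.e. \[ F(x_1,\dots,x_n)=\sum_{a\in A}c_a\,\delta_a(x_1)\cdots\delta_a(x_n) \] for some $A\subset X$ and constants $c_a\ne 0$ for all $a\in A$, where $\delta_a(x)=1$ if $x=a$ and $0$ otherwise. Then the partition rank of $F$ equals $|A|$.
   Context: Let $X_1,\dots,X_n$ be finite sets and $\mathbb{F}$ a field. For $S=\{s_1<\dots<s_m\}\subset\{1,\dots,n\}$ write $\vec x_S=(x_{s_1},\dots,x_{s_m})$. A partition of $\{1,\dots,n\}$ is a collection of nonempty pairwise disjoint subsets whose union is $\{1,\dots,n\}$; it is trivial if it consists of the single set $\{1,\dots,n\}$. A function $h:X_1\times\cdots\times X_n\to\mathbb{F}$ has partition rank $1$ if there is a non-trivial partition $P$ of $\{1,\dots,n\}$ and functions $f_B$ ($B\in P$) with $h(x_1,\dots,x_n)=\prod_{B\in P}f_B(\vec x_B)$. The partition rank of $F:X_1\times\cdots\times X_n\to\mathbb{F}$ is the minimal $r$ such that $F$ is a sum of $r$ functions of partition rank $1$ (the zero function has partition rank $0$). *)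

From HB Require Import structures.
From mathcomp Require Import all_boot all_order all_algebra.
Set Implicit Arguments. Unset Strict Implicit. Unset Printing Implicit Defensive.
Import GRing.Theory.
Local Open Scope ring_scope.

(* Points of X_1 x ... x X_n are modelled as functions x : 'I_n -> X
   (here all X_i equal a single finite type X, as in the theorem). *)

Definition depends_only_on (X : Type) (K : Type) (n : nat)
  (B : {set 'I_n}) (f : ('I_n -> X) -> K) : Prop :=
  forall x y : 'I_n -> X, (forall i, i \in B -> x i = y i) -> f x = f y.

Definition prank1 (X : Type) (K : fieldType) (n : nat)
  (h : ('I_n -> X) -> K) : Prop :=
  exists (P : {set {set 'I_n}}) (f : {set 'I_n} -> ('I_n -> X) -> K),
    [/\ partition P [set: 'I_n],
        P != [set [set: 'I_n]],
        (forall B, B \in P -> depends_only_on B (f B)) &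
        forall x, h x = \prod_(B in P) f B x].

Definition prank_le (X : Type) (K : fieldType) (n : nat)
  (F : ('I_n -> X) -> K) (r : nat) : Prop :=
  exists h : 'I_r -> ('I_n -> X) -> K,
    (forall i, prank1 (h i)) /\ forall x, F x = \sum_(i < r) h i x.

Definition partition_rank (X : Type) (K : fieldType) (n : nat)
  (F : ('I_n -> X) -> K) (r : nat) : Prop :=
  prank_le F r /\ forall r', prank_le F r' -> (r <= r')%N.

(* Each summand c_a d_a(x_1)...d_a(x_n) is c_a d_a(x_1) times d_a(x_2)...d_a(x_n), which
   gives partition rank at most |A|.  Conversely, every partition-rank-one function is a
   product f(x_S) g(x_T) over two disjoint nonempty blocks, and we induct on the number
   of coordinates.  Suppose the diagonal tensor on the coordinates J is a sum of r such
   products, s of which have a block equal to {j}, hence a factor phi(x_j).  Pick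
   v : X -> F supported on A, orthogonal to these s functions phi, with at least
   |A| - s nonzero entries (a dimension count).  Contracting coordinate j against v
   kills those s terms, leaves r - s products over J \ {j}, and turns the diagonal
   tensor into the diagonal tensor with coefficients c_a v_a, whose support therefore
   has at most r - s elements. *)

From HB Require Import structures.
From mathcomp Require Import all_boot all_order all_algebra.
From mathcomp Require Import ring.
Set Implicit Arguments. Unset Strict Implicit. Unset Printing Implicit Defensive.
Import GRing.Theory.
Local Open Scope ring_scope.

Section Orthogonal.
Variables (X : finType) (K : fieldType).

Definition dot (u l : X -> K) : K := \sum_t u t * l t.

Lemma dot_bump u l t0 tau :
  dot (fun t => u t + (if t == t0 then tau else 0)) l = dot u l + tau * l t0.
Proof.
rewrite /dot (bigD1 t0) // [in RHS](bigD1 t0) //= eqxx mulrDl -!addrA.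
congr (_ + _); rewrite addrC; congr (_ + _).
by apply: eq_bigr => t /negbTE ->; rewrite addr0.
Qed.

Lemma dot_subr u l p k :
  dot u (fun t => l t - k * p t) = dot u l - k * dot u p.
Proof. by rewrite /dot mulr_sumr -sumrB; apply: eq_bigr => t _; ring. Qed.

Lemma exists_orthogonal_large_support (I : finType) (phi : I -> X -> K)
    (S : {set I}) (P : {set X}) :
  exists u : X -> K,
    [/\ forall t, t \notin P -> u t = 0,
        forall i, i \in S -> dot u (phi i) = 0 &
        (#|P| <= #|[set t | u t != 0%R]| + #|S|)%N].
Proof.
move: {2}#|S| (erefl #|S|) => m; elim: m => [|m IH] in phi S P *.
  move/eqP; rewrite cards_eq0 => /eqP ->.
  exists (fun t => if t \in P then 1 else 0); split=> [t /negbTE -> //|i|].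
    by rewrite inE.
  rewrite cards0 addn0 subset_leq_card //; apply/subsetP => t tP.
  by rewrite inE tP oner_neq0.
move=> cardS; have [i iS] : exists i, i \in S by apply/set0Pn; rewrite -card_gt0 cardS.
have cardSi : #|S :\ i| = m by move: cardS; rewrite (cardsD1 i) iS => -[].
case: (pickP [pred t in P | phi i t != 0]) => [t0 /andP [t0P phit0] | phi_i0].
  (* Eliminate coordinate t0 from the other functionals, recurse, then fix u at t0. *)
  pose phi' j t := phi j t - phi j t0 / phi i t0 * phi i t.
  have [u' [u'P u'S u'card]] := IH phi' _ (P :\ t0) cardSi.
  pose tau := - dot u' (phi i) / phi i t0.
  pose u t := u' t + (if t == t0 then tau else 0).
  have u_phi_i : dot u (phi i) = 0 by rewrite dot_bump /tau; field.
  exists u; split.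
  - move=> t tP; rewrite /u; have /negbTE -> : t != t0 by apply: contraNneq tP => ->.
    by rewrite addr0 u'P // !inE (negbTE tP) andbF.
  - move=> j jS; case: (eqVneq j i) => [-> //|ji].
    have phi'_t0 : phi' j t0 = 0 by rewrite /phi' mulfVK // subrr.
    have := dot_bump u' (phi' j) t0 tau.
    by rewrite u'S ?inE ?ji // phi'_t0 mulr0 addr0 dot_subr u_phi_i mulr0 subr0.
  - rewrite (cardsD1 t0) t0P cardS addnS add1n ltnS.
    apply: leq_trans u'card _; rewrite cardSi leq_add2r.
    apply: subset_leq_card; apply/subsetP => t; rewrite !inE => u't.
    have /negbTE tt0 : t != t0.
      by apply: contraNneq u't => ->; rewrite u'P // !inE eqxx.
    by rewrite /u tt0 addr0.
have [u [uP uS ucard]] := IH phi _ P cardSi.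
exists u; split=> //.
  move=> j jS; case: (eqVneq j i) => [->|ji]; last by rewrite uS // !inE ji.
  rewrite /dot big1 // => t _; case: (boolP (t \in P)) => tP.
    by move: (phi_i0 t); rewrite /= tP => /negbFE/eqP ->; rewrite mulr0.
  by rewrite uP // mul0r.
by rewrite cardS addnS ltnW // ltnS -cardSi.
Qed.

End Orthogonal.

Section Contraction.
Variables (X : finType) (K : fieldType) (n : nat).
Local Notation point := ('I_n -> X).

Definition upd (x : point) (j : 'I_n) (t : X) : point :=
  fun i => if i == j then t else x i.

Definition contract (j : 'I_n) (v : X -> K) (f : point -> K) : point -> K :=
  fun x => \sum_t v t * f (upd x j t).

Definition diag (J : {set 'I_n}) (A : {set X}) (c : X -> K) : point -> K :=
  fun x => \sum_(a in A) c a * \prod_(i in J) (x i == a)%:R.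

Lemma dep_upd (B : {set 'I_n}) (f : point -> K) x j t :
  depends_only_on B f -> j \notin B -> f (upd x j t) = f x.
Proof.
move=> f_B jB; apply: f_B => i iB; rewrite /upd.
by have /negbTE -> : i != j by apply: contraNneq jB => <-.
Qed.

Lemma contract_dep (B : {set 'I_n}) (f : point -> K) j v :
  depends_only_on B f -> depends_only_on (B :\ j) (contract j v f).
Proof.
move=> f_B x y xy; apply: eq_bigr => t _; congr (_ * _); apply: f_B => i iB.
by rewrite /upd; case: eqP => // /eqP ij; apply: xy; rewrite !inE ij.
Qed.

Lemma contractMl (C : {set 'I_n}) (f g : point -> K) j v x :
  depends_only_on C g -> j \notin C ->
  contract j v (fun y => g y * f y) x = g x * contract j v f x.
Proof.
move=> g_C jC; rewrite /contract mulr_sumr; apply: eq_bigr => t _.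
by rewrite (dep_upd _ _ g_C jC) mulrCA.
Qed.

Lemma contract_singleton (f : point -> K) j v x :
  depends_only_on [set j] f -> contract j v f x = dot v (fun t => f (fun _ => t)).
Proof.
move=> f_j; apply: eq_bigr => t _; congr (_ * _); apply: f_j => i.
by rewrite inE /upd => ->.
Qed.

Lemma contract_sum (I : finType) (D : {set I}) (F : I -> point -> K) j v x :
  contract j v (fun y => \sum_(i in D) F i y) x = \sum_(i in D) contract j v (F i) x.
Proof.
rewrite /contract exchange_big /=; apply: eq_bigr => t _; exact: mulr_sumr.
Qed.

Lemma contract_diag (J : {set 'I_n}) A c j v x : j \in J ->
  contract j v (diag J A c) x = diag (J :\ j) A (fun a => c a * v a) x.
Proof.
move=> jJ; rewrite /contract /diag.
under eq_bigr do rewrite mulr_sumr.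
rewrite exchange_big /=; apply: eq_bigr => a _.
have upd_J t : \prod_(i in J) (upd x j t i == a)%:R
    = (t == a)%:R * \prod_(i in J :\ j) (x i == a)%:R :> K.
  rewrite (big_setD1 j jJ) /= {1}/upd eqxx; congr (_ * _).
  by apply: eq_bigr => i; rewrite !inE /upd => /andP [/negbTE ->].
rewrite (bigD1 a) //= [X in _ + X]big1 => [|t /negbTE ta]; last first.
  by rewrite upd_J ta mul0r !mulr0.
by rewrite upd_J eqxx mul1r addr0 mulrCA mulrA.
Qed.

Lemma diag_supp J A c x : diag J A c x = diag J [set a in A | c a != 0] c x.
Proof.
rewrite /diag (big_setID [set a | c a != 0]) /= [X in _ + X]big1 ?addr0.
  by apply: eq_bigl => a; rewrite !inE andbC.
by move=> a; rewrite !inE negbK => /andP [/eqP -> _]; rewrite mul0r.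
Qed.

Lemma diag_const (J : {set 'I_n}) (A : {set X}) c a :
  J != set0 -> a \in A -> diag J A c (fun _ => a) = c a.
Proof.
case/set0Pn => j jJ aA; rewrite /diag (bigD1 a) //= big1 ?mulr1 => [|i _].
  rewrite [X in _ + X]big1 ?addr0 // => b /andP [_ ba].
  by rewrite (big_setD1 j jJ) /= eq_sym (negbTE ba) mul0r mulr0.
by rewrite eqxx.
Qed.

Record split_term := SplitTerm {
  lblock : {set 'I_n}; rblock : {set 'I_n}; lfac : point -> K; rfac : point -> K }.

Definition split_eval (d : split_term) : point -> K := fun x => lfac d x * rfac d x.

Record split_on (J : {set 'I_n}) (d : split_term) : Prop := SplitOn {
  lblock_neq0 : lblock d != set0;
  rblock_neq0 : rblock d != set0;
  blocks_disjoint : [disjoint lblock d & rblock d];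
  lblock_sub : lblock d \subset J;
  rblock_sub : rblock d \subset J;
  lfac_dep : depends_only_on (lblock d) (lfac d);
  rfac_dep : depends_only_on (rblock d) (rfac d) }.

Lemma split_on_card J d : split_on J d -> (1 < #|J|)%N.
Proof.
case=> /set0Pn [l lL] /set0Pn [r rR] LR /subsetP LJ /subsetP RJ _ _.
apply/card_gt1P; exists l, r; split; [exact: LJ | exact: RJ |].
by apply: contraTneq rR => <-; rewrite (disjointFr LR lL).
Qed.

Definition swap_split d := SplitTerm (rblock d) (lblock d) (rfac d) (lfac d).

Definition orient j d := if j \in lblock d then swap_split d else d.

Lemma split_on_orient J d j : split_on J d -> split_on J (orient j d).
Proof.
rewrite /orient; case: ifP => // _ [L0 R0 LR LJ RJ dL dR].
by constructor; rewrite // disjoint_sym.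
Qed.

Lemma orient_eval j d x : split_eval (orient j d) x = split_eval d x.
Proof. by rewrite /orient; case: ifP => // _; rewrite /split_eval mulrC. Qed.

Lemma notin_lblock_orient J d j : split_on J d -> j \notin lblock (orient j d).
Proof.
rewrite /orient => -[_ _ LR _ _ _ _]; case: ifP => [jL | -> //].
by rewrite /= (disjointFr LR jL).
Qed.

Definition contract_split j v d :=
  SplitTerm (lblock d) (rblock d :\ j) (lfac d) (contract j v (rfac d)).

Lemma contract_split_eval J d j v x : split_on J d -> j \notin lblock d ->
  contract j v (split_eval d) x = split_eval (contract_split j v d) x.
Proof. by case=> _ _ _ _ _ dL _ jL; exact: contractMl dL jL. Qed.

Lemma split_on_contract J d j v :
  split_on J d -> j \notin lblock d -> rblock d != [set j] ->
  split_on (J :\ j) (contract_split j v d).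
Proof.
case=> L0 R0 LR LJ RJ dL dR jL Rj; constructor => //=.
- by apply: contraNneq Rj => /eqP; rewrite setD_eq0 subset1 (negbTE R0) orbF.
- exact: disjointWr (subsetDl _ _) LR.
- by rewrite subsetD1 LJ.
- exact: setSD.
- exact: contract_dep.
Qed.

Lemma diag_eq0 (J : {set 'I_n}) (A : {set X}) c :
  J != set0 -> {in A, forall a, c a != 0} -> (forall x, diag J A c x = 0) -> A = set0.
Proof.
move=> J0 c_neq0 F0; apply/setP => a; rewrite inE; apply/negP => aA.
by move: (c_neq0 a aA); rewrite -(diag_const c J0 aA) F0 eqxx.
Qed.

Lemma contract_diag_split_sum (J : {set 'I_n}) (A : {set X}) c (I : finType)
    (d : I -> split_term) (D : {set I}) j v :
  j \in J -> {in D, forall i, split_on J (d i)} ->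
  {in D, forall i, j \notin lblock (d i)} ->
  {in D :&: [set i | rblock (d i) == [set j]],
    forall i, dot v (fun t => rfac (d i) (fun _ => t)) = 0} ->
  (forall x, diag J A c x = \sum_(i in D) split_eval (d i) x) ->
  forall x, diag (J :\ j) A (fun a => c a * v a) x =
    \sum_(i in D :\: [set i | rblock (d i) == [set j]])
      split_eval (contract_split j v (d i)) x.
Proof.
move=> jJ d_on jL v_perp F_eq x; rewrite -contract_diag //.
transitivity (\sum_(i in D) contract j v (split_eval (d i)) x).
  by rewrite -contract_sum; apply: eq_bigr => t _; rewrite F_eq.
under eq_bigr => i iD do rewrite (contract_split_eval _ _ (d_on i iD) (jL i iD)).
rewrite (big_setID [set i | rblock (d i) == [set j]]) /= [X in X + _]big1 ?add0r //.
move=> i iDs; have /setIP [iD /[!inE] /eqP Rj] := iDs.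
rewrite /split_eval /= contract_singleton ?v_perp ?mulr0 //.
by rewrite -Rj; exact: rfac_dep (d_on i iD).
Qed.

Lemma diag_card_le (J : {set 'I_n}) (A : {set X}) c (I : finType)
    (d : I -> split_term) (D : {set I}) :
  J != set0 -> {in A, forall a, c a != 0} -> {in D, forall i, split_on J (d i)} ->
  (forall x, diag J A c x = \sum_(i in D) split_eval (d i) x) -> (#|A| <= #|D|)%N.
Proof.
move=> J0; have [m] : exists m, #|J| = m.+1.
  by exists #|J|.-1; rewrite prednK // card_gt0.
elim: m => [|m IH] in J A c d D J0 *.
  move=> J1 c_neq0 d_on F_eq; have D0 : D = set0.
    by apply/setP => i; rewrite inE; apply/negP => /d_on /split_on_card; rewrite J1.
  suff -> : A = set0 by rewrite cards0.
  by apply: diag_eq0 J0 c_neq0 _ => x; rewrite F_eq D0 big_set0.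
move=> Jm c_neq0 d_on F_eq; have [j jJ] := set0Pn _ J0.
have Jj : #|J :\ j| = m.+1 by move: Jm; rewrite (cardsD1 j) jJ => -[].
wlog jL : d d_on F_eq / {in D, forall i, j \notin lblock (d i)}.
  move=> WH; apply: (WH (fun i => orient j (d i))).
  - by move=> i /d_on /split_on_orient.
  - by move=> x; rewrite F_eq; apply: eq_bigr => i _; rewrite orient_eval.
  - by move=> i /d_on /notin_lblock_orient.
pose Ds := [set i | rblock (d i) == [set j]].
have [v [vA v_perp card_supp]] := exists_orthogonal_large_support
  (fun i t => rfac (d i) (fun _ => t)) (D :&: Ds) A.
pose A' := [set a in A | c a * v a != 0].
have supp_A' : [set t | v t != 0] \subset A'.
  apply/subsetP => t; rewrite !inE => vt.
  have tA : t \in A by apply: contraNT vt => /vA ->.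
  by rewrite tA mulf_neq0 // c_neq0.
have card_A' : (#|A'| <= #|D :\: Ds|)%N.
  apply: (IH (J :\ j) _ (fun a => c a * v a) (fun i => contract_split j v (d i))).
  - by rewrite -card_gt0 Jj.
  - exact: Jj.
  - by move=> a; rewrite inE => /andP [].
  - move=> i; rewrite !inE => /andP [Rj iD].
    exact: split_on_contract (d_on i iD) (jL i iD) Rj.
  move=> x; rewrite -diag_supp.
  exact: contract_diag_split_sum jJ d_on jL v_perp F_eq x.
rewrite -(cardsID Ds D) addnC; apply: leq_trans card_supp _.
by rewrite leq_add2r (leq_trans (subset_leq_card supp_A')).
Qed.

End Contraction.

Lemma setC_neq0 (T : finType) (A : {set T}) : (~: A != set0) = (A != setT).
Proof. by rewrite -setCT (inj_eq (@setC_inj _)). Qed.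

Section PartitionRankOne.
Variables (X : finType) (K : fieldType) (n : nat).
Local Notation point := ('I_n -> X).

Lemma prank1_split_on (h : point -> K) : (0 < n)%N -> prank1 h ->
  exists d : split_term X K n, split_on setT d /\ forall x, h x = split_eval d x.
Proof.
move=> n_gt0 [P [f [partP PnT f_dep h_eq]]].
have [B0 B0P B0T] : exists2 B0, B0 \in P & B0 != setT.
  apply/exists_inP; apply: contraNT PnT => /exists_inPn allT.
  have P_T B : B \in P -> B = setT by move=> BP; apply/eqP/negPn/allT.
  rewrite eqEsubset; apply/andP; split.
    by apply/subsetP => B BP; rewrite inE (P_T B BP).
  have : Ordinal n_gt0 \in cover P by rewrite (cover_partition partP) inE.
  by case/bigcupP => B BP _; rewrite sub1set -(P_T B BP).
exists (SplitTerm B0 (~: B0) (f B0) (fun x => \prod_(B in P :\ B0) f B x)).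
split; last by move=> x; rewrite h_eq (big_setD1 B0).
constructor => //=.
- exact: partition_neq0 partP B0P.
- by rewrite setC_neq0.
- by rewrite disjoints_subset setCK.
- exact: f_dep.
move=> x y xy; apply: eq_bigr => B; rewrite !inE => /andP [BB0 BP].
apply: (f_dep B BP) => i iB; apply: xy.
have := trivIsetP (partition_trivIset partP) B B0 BP B0P BB0.
by rewrite disjoints_subset => /subsetP; apply.
Qed.

Lemma prank1_mul (S : {set 'I_n}) (f g h : point -> K) :
  S != set0 -> S != setT -> depends_only_on S f -> depends_only_on (~: S) g ->
  (forall x, h x = f x * g x) -> prank1 h.
Proof.
move=> S0 ST f_S g_S h_eq.
have SC0 : ~: S != set0 by rewrite setC_neq0.
have /negbTE SCS : ~: S != S.
  by case/set0Pn: S0 => i iS; apply/eqP => /setP /(_ i); rewrite inE iS.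
exists [set S; ~: S], (fun B => if B == S then f else g); split.
- rewrite -(setUCr S); apply: partitionU1 => //.
    by rewrite /partition cover1 eqxx trivIset1 inE eq_sym SC0.
  by rewrite disjoints_subset setCK.
- apply: contraNneq ST => P1; have := set21 S (~: S).
  by rewrite P1 inE.
- by move=> B; rewrite !inE => /orP [] /eqP ->; rewrite ?eqxx ?SCS.
- by move=> x; rewrite h_eq big_setU1 ?big_set1 /= ?eqxx ?SCS // inE eq_sym SCS.
Qed.

Lemma prank1_delta (b : K) (a : X) : (1 < n)%N ->
  prank1 (fun x : point => b * \prod_(i < n) (x i == a)%:R).
Proof.
move=> n_gt1; pose i0 := Ordinal (ltnW n_gt1); pose i1 := Ordinal n_gt1.
apply: (@prank1_mul [set i0] (fun x => b * (x i0 == a)%:R)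
                             (fun x => \prod_(i in ~: [set i0]) (x i == a)%:R)).
- by apply/set0Pn; exists i0; rewrite inE.
- by apply/eqP => /setP /(_ i1); rewrite !inE.
- by move=> x y xy; rewrite xy ?inE.
- by move=> x y xy; apply: eq_bigr => i /xy ->.
move=> x; rewrite (bigD1 i0) //= -mulrA; congr (_ * (_ * _)).
by apply: eq_bigl => i; rewrite !inE.
Qed.

End PartitionRankOne.

Theorem lemma8 (X : finType) (K : fieldType) (n : nat) (hn : (2 <= n)%N)
  (A : {set X}) (c : X -> K) (hc : forall a, a \in A -> c a != 0)
  (F : ('I_n -> X) -> K)
  (hF : forall x, F x = \sum_(a in A) c a * \prod_(i < n) (x i == a)%:R) :
  partition_rank F #|A|.
Proof.
have n_gt0 : (0 < n)%N := ltnW hn.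
have F_diag x : F x = diag setT A c x.
  by rewrite hF; apply: eq_bigr => a _; congr (_ * _); apply: eq_bigl => i; rewrite inE.
split.
  exists (fun k x => c (enum_val k) * \prod_(i < n) (x i == enum_val k)%:R).
  split=> [k | x]; first exact: prank1_delta.
  by rewrite hF big_enum_val.
move=> r [h [h_rank1 F_h]].
have [d d_eq] := fin_all_exists (fun k => prank1_split_on n_gt0 (h_rank1 k)).
rewrite -[r]card_ord -cardsT; apply: (diag_card_le (J := setT) (d := d)) hc _ _.
- by rewrite -card_gt0 cardsT card_ord.
- by move=> k _; case: (d_eq k).
move=> x; rewrite -F_diag F_h; apply: eq_big => [k | k _]; first by rewrite inE.
by case: (d_eq k).
Qed.
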